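(* Under the standing assumptions below, let $a=v+ix\in B$ with $v\in V$ and $0\le i<k$. Then: (1) $a\in Z(B,+)$ if and only if $Av=v$ and $A^i(w)=-v+w+v$ for all $w\in V$; (2) $V\cap Z(B,+)=0$; (3) $\mathrm{Soc}(B)=0$, where $\mathrm{Soc}(B)=\{b\in B:\lambda_b=\mathrm{id}\text{ and }b\in Z(B,+)\}$.
   Context: Skew left brace $(B,+,\circ)$: groups $(B,+)$, $(B,\circ)$ with $a\circ(b+c)=a\circ b-a+a\circ c$; $\lambda_a(b)=-a+a\circ b$, $\sigma_a(b)=-a+b+a$, $a*b=-a+a\circ b-b$. Ideal: normal subgroup $I$ of $(B,+)$, $\lambda_a(I)\subseteq I$ for all $a$, normal in $(B,\circ)$. $I*J$ = additive subgroup generated by $\{i*j\}$; $B^{(2)}=B*B$, $B^{(3)}=B^{(2)}*B$. Standing assumptions: $B$ is a finite skew left brace and $X\subseteq B$ with $|X|\ge3$ and $\lambda_a(X)=X$, $\sigma_a(X)=X$ for all $a\in B$; $B$ is additively generated by $X$; the ideal $V$ generated by $\{x-y:x,y\in X\}$ is the smallest non-zero ideal of $B$; $B/V$ is a trivial skew left brace with cyclic additive group; the group $\{\sigma_a\lambda_b|_X:a,b\in V\}$ acts transitively on $X$; and $B^{(3)}=0$. Fix $x\in X$ and let $k=|B/V|$; then every element of $B$ is uniquely $v+ix$ with $v\in V$, $0\le i<k$. $A\in\mathrm{Aut}(V,+)$ is $Av=x+v-x$. *)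

From mathcomp Require Import all_boot.
Set Implicit Arguments. Unset Strict Implicit. Unset Printing Implicit Defensive.

Record skew_brace (T : finType) := SkewBrace {
  sadd : T -> T -> T;
  szero : T;
  sopp : T -> T;
  scirc : T -> T -> T;
  sone : T;
  sinv : T -> T;
  saddA : forall a b c, sadd a (sadd b c) = sadd (sadd a b) c;
  sadd0 : forall a, sadd szero a = a;
  saddN : forall a, sadd (sopp a) a = szero;
  scircA : forall a b c, scirc a (scirc b c) = scirc (scirc a b) c;
  scirc1 : forall a, scirc sone a = a;
  scircV : forall a, scirc (sinv a) a = sone;
  sbrace : forall a b c,
    scirc a (sadd b c) = sadd (sadd (scirc a b) (sopp a)) (scirc a c)
}.

Section Defs.
Variables (T : finType) (B : skew_brace T).

Local Notation "a + b" := (sadd B a b).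
Local Notation "- a" := (sopp B a).
Local Notation "a 'o' b" := (scirc B a b) (at level 40).

Definition lam (a b : T) : T := - a + (a o b).
Definition sig (a b : T) : T := (- a + b) + a.
Definition star (a b : T) : T := (- a + (a o b)) + - b.

Definition nmul (n : nat) (x : T) : T := iter n (sadd B x) (szero B).

Definition is_addsub (H : {set T}) : bool :=
  (szero B \in H) && [forall a, forall b, ((a \in H) && (b \in H)) ==> (a + - b \in H)].

Definition addgen (S : {set T}) : {set T} :=
  \bigcap_(H : {set T} | is_addsub H && (S \subset H)) H.

Definition starset (I J : {set T}) : {set T} :=
  addgen [set star i j | i in I, j in J].

Definition B2 : {set T} := starset [set: T] [set: T].
Definition B3 : {set T} := starset B2 [set: T].

Definition is_ideal (I : {set T}) : Prop :=
  is_addsub I /\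
  (forall a y, y \in I -> (- a + y) + a \in I) /\
  (forall a y, y \in I -> lam a y \in I) /\
  (sone B \in I) /\ (forall y z, y \in I -> z \in I -> y o sinv B z \in I) /\
  (forall a y, y \in I -> (a o y) o sinv B a \in I).

Definition addcenter : {set T} := [set b | [forall c, b + c == c + b]].

Definition socle : {set T} :=
  [set b | [forall c, lam b c == c] && (b \in addcenter)].

End Defs.

From mathcomp Require Import all_boot.
Set Implicit Arguments. Unset Strict Implicit. Unset Printing Implicit Defensive.

(* Since B^(3) = 0 and V is the smallest nonzero ideal, either B^(2) = 0 or V lies
   in B^(2); in both cases v * b = 0, i.e. lambda_v = id, for v in V.  This makes
   V ∩ Z(B,+) an ideal.  Were it nonzero, it would contain V, so every sigma_a
   lambda_b with a, b in V would act trivially on X, and transitivity would force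
   |X| = 1.  The socle is always an ideal, and a nonzero socle would contain V,
   making V central, hence V = V ∩ Z(B,+) = 0.  For (1): X generates (B,+) and
   lies in the coset V + x, so a = v + ix is central iff it commutes with x and
   with V; as ix commutes with x, these conditions read Av = v and
   A^i w = -v + w + v. *)

Declare Scope brace_scope.

Section SkewBraceTheory.
Variables (T : finType) (B : skew_brace T).

Local Notation "0" := (szero B) : brace_scope.
Local Notation "1" := (sone B) : brace_scope.
Local Notation "a + b" := (sadd B a b) : brace_scope.
Local Notation "- a" := (sopp B a) : brace_scope.
Local Notation "a - b" := (sadd B a (sopp B b)) : brace_scope.
Local Notation "a ∘ b" := (scirc B a b) (at level 40, left associativity) : brace_scope.
Local Notation "a ^-1" := (sinv B a) : brace_scope.
Local Open Scope brace_scope.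

Lemma addrA a b c : a + (b + c) = a + b + c. Proof. exact: saddA. Qed.
Lemma add0r a : 0 + a = a. Proof. exact: sadd0. Qed.
Lemma addNr a : - a + a = 0. Proof. exact: saddN. Qed.

Lemma addrN a : a - a = 0.
Proof.
have -> : a - a = - - a - a + (a - a) by rewrite addNr add0r.
by rewrite -addrA (addrA (- a)) addNr add0r addNr.
Qed.

Lemma addr0 a : a + 0 = a. Proof. by rewrite -(addNr a) addrA addrN add0r. Qed.
Lemma addKr a b : - a + (a + b) = b. Proof. by rewrite addrA addNr add0r. Qed.
Lemma addNKr a b : a + (- a + b) = b. Proof. by rewrite addrA addrN add0r. Qed.
Lemma addrK a b : b + a - a = b. Proof. by rewrite -addrA addrN addr0. Qed.
Lemma addrNK a b : b - a + a = b. Proof. by rewrite -addrA addNr addr0. Qed.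

Lemma addrI a b c : a + b = a + c -> b = c.
Proof. by move=> e; rewrite -(addKr a b) e addKr. Qed.

Lemma addIr a b c : b + a = c + a -> b = c.
Proof. by move=> e; rewrite -(addrK a b) e addrK. Qed.

Lemma oppr_uniq a b : a + b = 0 -> b = - a.
Proof. by move=> e; apply: (@addrI a); rewrite e addrN. Qed.

Lemma opprK a : - - a = a. Proof. by symmetry; apply: oppr_uniq; rewrite addNr. Qed.
Lemma oppr0 : - 0 = 0. Proof. by symmetry; apply: oppr_uniq; rewrite addr0. Qed.

Lemma opprD a b : - (a + b) = - b - a.
Proof. by symmetry; apply: oppr_uniq; rewrite addrA addrK addrN. Qed.

Lemma circA a b c : a ∘ (b ∘ c) = a ∘ b ∘ c. Proof. exact: scircA. Qed.
Lemma circ1 a : 1 ∘ a = a. Proof. exact: scirc1. Qed.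
Lemma circVr a : a^-1 ∘ a = 1. Proof. exact: scircV. Qed.

Lemma circrV a : a ∘ a^-1 = 1.
Proof.
have -> : a ∘ a^-1 = a^-1^-1 ∘ a^-1 ∘ (a ∘ a^-1) by rewrite circVr circ1.
by rewrite -circA (circA a^-1) circVr circ1 circVr.
Qed.

Lemma circr1 a : a ∘ 1 = a. Proof. by rewrite -(circVr a) circA circrV circ1. Qed.

Lemma circr0 a : a ∘ 0 = a.
Proof.
have := sbrace B a 0 0; rewrite add0r -addrA -{1}[a ∘ 0]addr0 => /addrI.
by move/(f_equal (sadd B a)); rewrite addNKr addr0.
Qed.

Lemma one_eq0 : 1 = 0. Proof. by rewrite -(circr0 1) circ1. Qed.

Lemma circE a b : a ∘ b = a + lam B a b. Proof. by rewrite /lam addNKr. Qed.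

Lemma lamD a b c : lam B a (b + c) = lam B a b + lam B a c.
Proof. by rewrite /lam sbrace -!addrA. Qed.

Lemma lam0 a : lam B a 0 = 0. Proof. by rewrite /lam circr0 addNr. Qed.

Lemma lamN a b : lam B a (- b) = - lam B a b.
Proof. by apply: oppr_uniq; rewrite -lamD addrN lam0. Qed.

Lemma lamM a b c : lam B (a ∘ b) c = lam B a (lam B b c).
Proof. by rewrite {1}/lam -circA (circE b c) sbrace -addrA addKr. Qed.

Lemma lam_id0 c : lam B 0 c = c.
Proof. by rewrite /lam -one_eq0 circ1 one_eq0 oppr0 add0r. Qed.

Lemma lamK a c : lam B a (lam B a^-1 c) = c.
Proof. by rewrite -lamM circrV one_eq0 lam_id0. Qed.

Lemma lamKV a c : lam B a^-1 (lam B a c) = c.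
Proof. by rewrite -lamM circVr one_eq0 lam_id0. Qed.

Lemma addsubP (H : {set T}) :
  is_addsub B H <-> 0 \in H /\ forall a b, a \in H -> b \in H -> a - b \in H.
Proof.
split=> [/andP[H0 /forallP HB] | [H0 HB]].
  by split=> // a b aH bH; move/forallP/(_ b)/implyP: (HB a); apply; rewrite aH.
rewrite /is_addsub H0; apply/forallP=> a; apply/forallP=> b.
by apply/implyP=> /andP[]; apply: HB.
Qed.

Section AdditiveSubgroup.
Variable H : {set T}.
Hypothesis subH : is_addsub B H.

Lemma addsub0 : 0 \in H. Proof. by case/addsubP: subH. Qed.

Lemma addsubN b : b \in H -> - b \in H.
Proof. by case/addsubP: subH => H0 HB bH; rewrite -[- b]add0r; apply: HB. Qed.

Lemma addsubD a b : a \in H -> b \in H -> a + b \in H.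
Proof.
case/addsubP: subH => _ HB aH bH; rewrite -[b]opprK; apply: HB => //.
exact: addsubN.
Qed.

End AdditiveSubgroup.

Lemma sub_addgen (S : {set T}) : S \subset addgen B S.
Proof. by apply/bigcapsP=> H /andP[]. Qed.

Lemma addgen_min (S H : {set T}) : is_addsub B H -> S \subset H -> addgen B S \subset H.
Proof. by move=> subH sSH; apply: bigcap_inf; rewrite subH sSH. Qed.

Lemma addsub_addgen (S : {set T}) : is_addsub B (addgen B S).
Proof.
apply/addsubP; split; first by apply/bigcapP=> H /andP[/addsub0].
move=> a b /bigcapP aS /bigcapP bS; apply/bigcapP=> H SH.
by case/andP: (SH) => /addsubP[_ HB] _; apply: HB; [apply: aS | apply: bS].
Qed.

Lemma addgen_ind (S : {set T}) (P : pred T) :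
  P 0 -> (forall a b, P a -> P b -> P (a - b)) -> (forall s, s \in S -> P s) ->
  forall y, y \in addgen B S -> P y.
Proof.
move=> P0 PB PS y Sy.
suff /subsetP/(_ y Sy) : addgen B S \subset [set y | P y] by rewrite inE.
apply: addgen_min; last by apply/subsetP=> s /PS; rewrite inE.
by apply/addsubP; split=> [|a b]; rewrite ?inE // => Pa Pb; apply: PB.
Qed.

Lemma starE a b : star B a b = lam B a b - b. Proof. by []. Qed.

Lemma lamE_star a b : lam B a b = star B a b + b.
Proof. by rewrite starE addrNK. Qed.

Lemma star_starset (I J : {set T}) a b :
  a \in I -> b \in J -> star B a b \in starset B I J.
Proof. by move=> aI bJ; apply: (subsetP (sub_addgen _)); apply/imset2P; exists a b. Qed.

Let B2sub : is_addsub B (B2 B) := addsub_addgen _.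

Lemma B2_star a b : star B a b \in B2 B.
Proof. exact: star_starset. Qed.

Lemma B2_lam c y : y \in B2 B -> lam B c y \in B2 B.
Proof.
move: y; apply: addgen_ind => [|a b Ha Hb|_ /imset2P[a b _ _ ->]].
- by rewrite lam0 addsub0.
- by rewrite lamD lamN addsubD ?addsubN.
have -> : lam B c (star B a b) = star B (c ∘ a) b - star B c b.
  by rewrite /star !lamD !lamN /lam circA !opprD !opprK !addrA addrK addrNK.
by rewrite addsubD ?addsubN ?B2_star.
Qed.

Lemma conjB c a b : - c + (a - b) + c = (- c + a + c) - (- c + b + c).
Proof. by rewrite !opprD !opprK !addrA addrK. Qed.

Lemma B2_conj c y : y \in B2 B -> - c + y + c \in B2 B.
Proof.
move: y; apply: addgen_ind => [|a b Ha Hb|_ /imset2P[a b _ _ ->]].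
- by rewrite addr0 addNr addsub0.
- by rewrite conjB addsubD ?addsubN.
have [d ad] : exists d, lam B a d = - c by exists (lam B a^-1 (- c)); rewrite lamK.
have -> : - c + star B a b + c = star B a (d + b) - star B a d.
  by rewrite !starE lamD ad; set l := lam B a b; rewrite !opprD !opprK !addrA addrNK.
by rewrite addsubD ?addsubN ?B2_star.
Qed.

Lemma inv_lam a : a^-1 = lam B a^-1 (- a).
Proof.
have <- : lam B a a^-1 = - a by rewrite /lam circrV one_eq0 addr0.
by rewrite lamKV.
Qed.

Lemma circ_conj a y : a ∘ y ∘ a^-1 = a + lam B a (y + star B y a^-1) - a.
Proof.
by rewrite -circA (circE y) (lamE_star y) addrA sbrace circrV one_eq0 addr0 (circE a).
Qed.

Lemma B2_ideal : is_ideal B (B2 B).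
Proof.
do ![split] => [||||y z Hy Hz|a y Hy].
- exact: B2sub.
- exact: B2_conj.
- exact: B2_lam.
- by rewrite one_eq0 addsub0.
- rewrite circE lamE_star addrA inv_lam.
  apply: (addsubD B2sub); first exact: (addsubD B2sub Hy (B2_star _ _)).
  by apply: B2_lam; apply: (addsubN B2sub).
rewrite circ_conj -{1}[a]opprK.
by apply/B2_conj/B2_lam/(addsubD B2sub Hy (B2_star _ _)).
Qed.

Lemma addcenterP b : reflect (forall c, b + c = c + b) (b \in addcenter B).
Proof. by rewrite inE; apply: (iffP forallP) => bC c; apply/eqP. Qed.

Lemma commrN a b : a + b = b + a -> a - b = - b + a.
Proof. by move=> ab; apply: (@addIr b); rewrite addrNK -addrA ab addKr. Qed.

Lemma commrD a c d : a + c = c + a -> a + d = d + a -> a + (c + d) = c + d + a.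
Proof. by move=> ac ad; rewrite addrA ac -addrA ad addrA. Qed.

Lemma addcenter0 : 0 \in addcenter B.
Proof. by apply/addcenterP=> c; rewrite add0r addr0. Qed.

Lemma addcenterB a b : a \in addcenter B -> b \in addcenter B -> a - b \in addcenter B.
Proof.
move=> /addcenterP aC /addcenterP bC; apply/addcenterP=> c.
by rewrite -addrA -(commrN (esym (bC c))) addrA aC -addrA.
Qed.

Lemma addsub_center : is_addsub B (addcenter B).
Proof. by apply/addsubP; split; [apply: addcenter0 | apply: addcenterB]. Qed.

Lemma addcenter_lam a b : b \in addcenter B -> lam B a b \in addcenter B.
Proof. by move=> /addcenterP bC; apply/addcenterP=> c; rewrite -(lamK a c) -!lamD bC. Qed.

Lemma conj_center a y : y \in addcenter B -> - a + y + a = y.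
Proof. by move=> /addcenterP yC; rewrite -addrA yC addKr. Qed.

Lemma sig_center a w : a \in addcenter B -> sig B a w = w.
Proof. by move=> /addcenterP aC; rewrite /sig -addrA -aC addKr. Qed.

Lemma socleP b :
  reflect ((forall c, lam B b c = c) /\ b \in addcenter B) (b \in socle B).
Proof.
rewrite [_ \in socle B]inE; apply: (iffP andP) => [[/forallP bF bC] | [bF bC]].
  by split=> // c; apply/eqP.
by split=> //; apply/forallP=> c; apply/eqP.
Qed.

Lemma socle0 : 0 \in socle B.
Proof. by apply/socleP; split; [apply: lam_id0 | apply: addcenter0]. Qed.

Lemma inv_lam_id b : (forall c, lam B b c = c) -> b^-1 = - b.
Proof.
move=> bF; have bNb : b ∘ - b = 1 by rewrite circE bF addrN one_eq0.
by rewrite -[- b]circ1 -(circVr b) -circA bNb circr1.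
Qed.

Lemma socle_circV y z :
  y \in socle B -> z \in socle B -> y ∘ z^-1 \in socle B /\ y ∘ z^-1 = y - z.
Proof.
move=> /socleP[yF yC] /socleP[zF zC].
have zVF c : lam B z^-1 c = c by rewrite -{1}(zF c) lamKV.
have yzV : y ∘ z^-1 = y - z by rewrite circE yF (inv_lam_id zF).
split=> //; apply/socleP; split; first by move=> c; rewrite lamM zVF yF.
by rewrite yzV addcenterB.
Qed.

Lemma socle_conj a y : y \in socle B -> a ∘ y ∘ a^-1 = lam B a y.
Proof.
case/socleP=> yF yC; rewrite circ_conj starE yF addrN addr0.
by move/addcenterP: (addcenter_lam a yC) => <-; rewrite addrK.
Qed.

Lemma socle_lam a y : y \in socle B -> lam B a y \in socle B.
Proof.
move=> ys; have /socleP[yF yC] := ys; apply/socleP.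
split; last exact: addcenter_lam.
by move=> c; rewrite -(socle_conj a ys) !lamM yF lamK.
Qed.

Lemma socle_ideal : is_ideal B (socle B).
Proof.
have socB y z : y \in socle B -> z \in socle B -> y - z \in socle B.
  by move=> ys zs; have [] := socle_circV ys zs => + <-.
do ![split] => [|a y ys|||y z ys zs|a y ys].
- by apply/addsubP; split; [apply: socle0 | apply: socB].
- by case/socleP: (ys) => _ /(conj_center a) ->.
- exact: socle_lam.
- by rewrite one_eq0 socle0.
- by case: (socle_circV ys zs).
by rewrite socle_conj ?socle_lam.
Qed.

Lemma addsubI (H K : {set T}) : is_addsub B H -> is_addsub B K -> is_addsub B (H :&: K).
Proof.
move=> /addsubP[H0 HB] /addsubP[K0 KB]; apply/addsubP; rewrite inE H0 K0.
by split=> // a b /setIP[aH aK] /setIP[bH bK]; rewrite inE HB ?KB.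
Qed.

Lemma cap_addcenter_ideal (V : {set T}) :
  is_ideal B V -> (forall y, y \in V -> forall c, lam B y c = c) ->
  is_ideal B (V :&: addcenter B).
Proof.
case=> Vsub [_ [Vlam [V1 [VcircV VcircJ]]]] VF.
do ![split] => [|a y /setIP[_ /(conj_center a) ->] //|a y /setIP[yV yC]||y z|a y].
- exact: addsubI Vsub addsub_center.
- by rewrite inE Vlam ?addcenter_lam.
- by rewrite inE V1 one_eq0 addcenter0.
- move=> /setIP[yV yC] /setIP[zV zC]; rewrite inE VcircV //=.
  by rewrite circE VF // (inv_lam_id (VF z zV)) addcenterB.
move=> /setIP[yV yC]; rewrite inE VcircJ //=.
have ayV : lam B a y \in V by apply: Vlam.
have -> : a ∘ y = lam B a y ∘ a.
  rewrite circE [RHS]circE (VF _ ayV).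
  by move/addcenterP: (addcenter_lam a yC) => ->.
by rewrite -circA circrV circr1 addcenter_lam.
Qed.

Section MinimalIdeal.
Variable V : {set T}.
Hypothesis Vid : is_ideal B V.
Hypothesis Vmin : forall I, is_ideal B I -> I != [set 0] -> V \subset I.

Lemma minimal_idealP I : is_ideal B I -> I = [set 0] \/ V \subset I.
Proof. by case: (eqVneq I [set 0]) => [|I0 Iid]; [left | right; apply: Vmin]. Qed.

Lemma minimal_lam_id : B3 B = [set 0] -> forall y, y \in V -> forall c, lam B y c = c.
Proof.
move=> B3_0 y yV c; suff : star B y c \in [set 0].
  by rewrite lamE_star in_set1 => /eqP->; rewrite add0r.
case: (minimal_idealP B2_ideal) => [<-|VB2]; first exact: B2_star.
by rewrite -B3_0 star_starset ?(subsetP VB2) ?inE.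
Qed.

Hypothesis VF : forall y, y \in V -> forall c, lam B y c = c.

Lemma foldr_sig_lam_central y (s : seq (T * T)) :
  {subset V <= addcenter B} -> all (fun p => (p.1 \in V) && (p.2 \in V)) s ->
  foldr (fun p w => sig B p.1 (lam B p.2 w)) y s = y.
Proof.
move=> VZ; elim: s => //= p s IHs /andP[/andP[p1V p2V] sV].
by rewrite IHs // VF // sig_center ?VZ.
Qed.

Lemma cap_addcenter_eq0 (X : {set T}) :
  1 < #|X| ->
  (forall y z, y \in X -> z \in X ->
     exists s : seq (T * T),
       all (fun p => (p.1 \in V) && (p.2 \in V)) s /\
       foldr (fun p w => sig B p.1 (lam B p.2 w)) y s = z) ->
  V :&: addcenter B = [set 0].
Proof.
move=> X2 Xtrans; case: (minimal_idealP (cap_addcenter_ideal Vid VF)) => // /subsetIP[_ VZ].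
suff : #|X| <= 1 by rewrite leqNgt X2.
apply/card_le1_eqP=> y z yX zX; have [s [sV <-]] := Xtrans y z yX zX.
by rewrite foldr_sig_lam_central //; apply/subsetP.
Qed.

Lemma socle_eq0 : V != [set 0] -> V :&: addcenter B = [set 0] -> socle B = [set 0].
Proof.
move=> V0 VZ0; case: (minimal_idealP socle_ideal) => // Vsoc; case/eqP: V0.
apply/eqP; rewrite eqEsubset -{1}VZ0 subsetIidl sub1set (addsub0 Vid.1) andbT.
by apply/subsetP=> y /(subsetP Vsoc)/socleP[].
Qed.

End MinimalIdeal.

Lemma nmulC x i : x + nmul B i x = nmul B i x + x.
Proof. by elim: i => [|i IHi]; rewrite /= ?add0r ?addr0 // -addrA -IHi. Qed.

Lemma iter_conj x i w : iter i (fun w => x + w - x) w = nmul B i x + w - nmul B i x.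
Proof.
elim: i => [|i IHi]; first by rewrite /= add0r oppr0 addr0.
by rewrite iterS IHi [nmul B i.+1 x]/= opprD !addrA.
Qed.

Lemma addcenter_addgen (S : {set T}) a :
  addgen B S = [set: T] -> (forall s, s \in S -> a + s = s + a) -> a \in addcenter B.
Proof.
move=> SgenT aS; apply/addcenterP=> c; apply/eqP.
have : c \in addgen B S by rewrite SgenT inE.
move: c; apply: addgen_ind => [|c d /eqP ac /eqP ad|s /aS ->] //.
  by rewrite add0r addr0.
by apply/eqP/commrD/commrN.
Qed.

Lemma commr_conj v n x : n + x = x + n -> (v + n + x = x + (v + n) <-> x + v - x = v).
Proof.
move=> nx; rewrite -addrA nx !addrA.
by split=> [/addIr <-|xv]; [rewrite addrK | rewrite -{1}xv addrNK].
Qed.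

Lemma commr_conj_iter v n w : v + n + w = w + (v + n) <-> n + w - n = - v + w + v.
Proof.
split=> e.
  have -> : n + w = - v + w + v + n.
    by rewrite -(addKr v (n + w)) [v + (n + w)]addrA e !addrA.
  by rewrite addrK.
by rewrite -addrA -[n + w](addrNK n) e !addrA addrN add0r.
Qed.

Lemma addcenter_coset (X V : {set T}) x v i :
  addgen B X = [set: T] -> x \in X -> [set y - z | y in X, z in X] \subset V ->
  v + nmul B i x \in addcenter B <->
  x + v - x = v /\
  forall w, w \in V -> iter i (fun w => x + w - x) w = - v + w + v.
Proof.
move=> XgenT xX XXV; have nx := esym (nmulC x i).
split=> [/addcenterP aC | [xv Vconj]].
  by split=> [|w _]; [apply/(commr_conj _ nx) | rewrite iter_conj; apply/commr_conj_iter].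
apply: (addcenter_addgen XgenT) => s sX.
have sxV : s - x \in V by apply: (subsetP XXV); apply: imset2_f.
rewrite -(addrNK x s) commrD //; last exact/(commr_conj _ nx).
by apply/commr_conj_iter; rewrite -iter_conj Vconj.
Qed.

End SkewBraceTheory.

Theorem lemma5p5 (T : finType) (B : skew_brace T) (X V : {set T}) (x : T) :
  (* |X| >= 3, X invariant under all lambda_a and sigma_a *)
  3 <= #|X| ->
  (forall a, [set lam B a y | y in X] = X) ->
  (forall a, [set sig B a y | y in X] = X) ->
  (* B is additively generated by X *)
  addgen B X = [set: T] ->
  (* V is the ideal generated by { x - y : x, y in X } *)
  is_ideal B V ->
  [set sadd B y (sopp B z) | y in X, z in X] \subset V ->
  (forall I, is_ideal B I ->
     [set sadd B y (sopp B z) | y in X, z in X] \subset I -> V \subset I) ->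
  (* V is the smallest non-zero ideal *)
  V != [set szero B] ->
  (forall I, is_ideal B I -> I != [set szero B] -> V \subset I) ->
  (* B/V is a trivial skew brace: a o b = a + b mod V *)
  (forall a b, sadd B (sopp B (sadd B a b)) (scirc B a b) \in V) ->
  (* (B/V,+) is cyclic *)
  (exists g, forall b, exists n, sadd B (sopp B (nmul B n g)) b \in V) ->
  (* the group generated by { sigma_a lambda_b |_X : a, b in V } is
     transitive on X *)
  (forall y z, y \in X -> z \in X ->
     exists s : seq (T * T),
       all (fun p => (p.1 \in V) && (p.2 \in V)) s /\
       foldr (fun p w => sig B p.1 (lam B p.2 w)) y s = z) ->
  (* B^(3) = 0 *)
  B3 B = [set szero B] ->
  (* fixed x in X, k = |B/V|, A v = x + v - x *)
  x \in X ->
  let k := #|T| %/ #|V| in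
  let A := fun w => sadd B (sadd B x w) (sopp B x) in
  (forall v i, v \in V -> i < k ->
     let a := sadd B v (nmul B i x) in
     a \in addcenter B <->
     (A v = v /\
      forall w, w \in V -> iter i A w = sadd B (sadd B (sopp B v) w) v)) /\
  V :&: addcenter B = [set szero B] /\
  socle B = [set szero B].
Proof.
move=> X3 _ _ XgenT Vid XXV _ V0 Vmin _ _ Xtrans B3_0 xX k A.
have VF := minimal_lam_id Vmin B3_0.
have VZ0 := cap_addcenter_eq0 Vid Vmin VF (ltnW X3) Xtrans.
split; last by split; last exact: socle_eq0 Vid Vmin V0 VZ0.
by move=> v i _ _; exact: addcenter_coset XgenT xX XXV.
Qed.
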